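(* Let $M$ and $k$ be fixed nonnegative integers. Let $\phi(x_1,\dots,x_n)$ be a term of $\mathcal{L}_{\mathrm{Ab}}$ with $n$ variables and depth $l\le k$. Assume $a_1,\dots,a_n\in[-2^M,2^M]$. Then $$f_{\tau(\phi)}(r_{M,k}(a_1),\dots,r_{M,k}(a_n))=r_{M,k}(f_\phi(a_1,\dots,a_n)),$$ and moreover $r_{M,k}(f_\phi(a_1,\dots,a_n))\in\left[\tfrac12-\tfrac{1}{2^{k-l+1}},\tfrac12+\tfrac{1}{2^{k-l+1}}\right]$.
   Context: $\mathcal{L}_{\mathrm{Ab}}=\langle +,-,0,\wedge,\vee\rangle$ is the language of abelian lattice-ordered groups; for an $\mathcal{L}_{\mathrm{Ab}}$-term $\phi$ in variables $x_1,\dots,x_n$, $f_\phi:\mathbb{R}^n\to\mathbb{R}$ is its term function in the ordered additive group of reals ($+$, unary $-$, $0$, $\wedge=\min$, $\vee=\max$). $\mathcal{L}_{\mathrm{MV}[\frac12]}=\langle\oplus,\otimes,\neg,\to,0,1,\tfrac12,\wedge,\vee\rangle$ is interpreted in $[0,1]_{\text{\L}}[\tfrac12]$: domain $[0,1]$, $\neg a=1-a$, $a\otimes b=\max(0,a+b-1)$, $a\oplus b=\min(1,a+b)$, $a\to b=\min(1,1-a+b)$, $\wedge=\min$, $\vee=\max$, constants $0,1,\tfrac12$ interpreted as themselves; $f_\psi:[0,1]^n\to[0,1]$ denotes the term function of an $\mathcal{L}_{\mathrm{MV}[\frac12]}$-term $\psi$. Depth: variables and constants have depth $0$, $\mathrm{depth}(-\phi)=\mathrm{depth}(\phi)+1$,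 and $\mathrm{depth}(\phi\circ\psi)=\max(\mathrm{depth}(\phi),\mathrm{depth}(\psi))+1$ for $\circ\in\{+,\wedge,\vee\}$. The translation $\tau$ from $\mathcal{L}_{\mathrm{Ab}}$-terms to $\mathcal{L}_{\mathrm{MV}[\frac12]}$-terms is defined recursively: $\tau(x)=x$ for variables $x$; $\tau(0)=\tfrac12$; $\tau(-\phi)=\neg\tau(\phi)$; $\tau(\phi+\psi)=(\tau(\phi)\oplus\tau(\psi))\otimes(\tfrac12\oplus(\tau(\phi)\otimes\tau(\psi)))$; $\tau(\phi\vee\psi)=\tau(\phi)\vee\tau(\psi)$; $\tau(\phi\wedge\psi)=\tau(\phi)\wedge\tau(\psi)$. For nonnegative integers $M,k$, $r_{M,k}:\mathbb{R}\to\mathbb{R}$ is $r_{M,k}(a)=\frac{a}{2^{M+k+1}}+\frac12$. *)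

From Stdlib Require Import Reals Lra Lia.
Open Scope R_scope.

Inductive AbTerm : Type :=
| AVar : nat -> AbTerm
| AZero : AbTerm
| ANeg : AbTerm -> AbTerm
| AAdd : AbTerm -> AbTerm -> AbTerm
| AMeet : AbTerm -> AbTerm -> AbTerm
| AJoin : AbTerm -> AbTerm -> AbTerm.

Inductive MVTerm : Type :=
| MVar : nat -> MVTerm
| MZero : MVTerm
| MOne : MVTerm
| MHalf : MVTerm
| MNeg : MVTerm -> MVTerm
| MOplus : MVTerm -> MVTerm -> MVTerm
| MOtimes : MVTerm -> MVTerm -> MVTerm
| MImp : MVTerm -> MVTerm -> MVTerm
| MMeet : MVTerm -> MVTerm -> MVTerm
| MJoin : MVTerm -> MVTerm -> MVTerm.

Fixpoint ab_vars_lt (n : nat) (t : AbTerm) : Prop :=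
  match t with
  | AVar i => (i < n)%nat
  | AZero => True
  | ANeg s => ab_vars_lt n s
  | AAdd s u | AMeet s u | AJoin s u => ab_vars_lt n s /\ ab_vars_lt n u
  end.

Fixpoint eval_Ab (t : AbTerm) (a : nat -> R) : R :=
  match t with
  | AVar i => a i
  | AZero => 0
  | ANeg s => - eval_Ab s a
  | AAdd s u => eval_Ab s a + eval_Ab u a
  | AMeet s u => Rmin (eval_Ab s a) (eval_Ab u a)
  | AJoin s u => Rmax (eval_Ab s a) (eval_Ab u a)
  end.

(* Term function in the standard MV-algebra [0,1] with constant 1/2
   (the operations are given by their defining formulas; on inputs in
   [0,1] these are exactly the operations of [0,1]_L[1/2]). *)
Fixpoint eval_MV (t : MVTerm) (a : nat -> R) : R :=
  match t with
  | MVar i => a i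
  | MZero => 0
  | MOne => 1
  | MHalf => 1/2
  | MNeg s => 1 - eval_MV s a
  | MOplus s u => Rmin 1 (eval_MV s a + eval_MV u a)
  | MOtimes s u => Rmax 0 (eval_MV s a + eval_MV u a - 1)
  | MImp s u => Rmin 1 (1 - eval_MV s a + eval_MV u a)
  | MMeet s u => Rmin (eval_MV s a) (eval_MV u a)
  | MJoin s u => Rmax (eval_MV s a) (eval_MV u a)
  end.

Fixpoint depth (t : AbTerm) : nat :=
  match t with
  | AVar _ | AZero => 0
  | ANeg s => S (depth s)
  | AAdd s u | AMeet s u | AJoin s u => S (Nat.max (depth s) (depth u))
  end.

Fixpoint tau (t : AbTerm) : MVTerm :=
  match t with
  | AVar i => MVar i
  | AZero => MHalf
  | ANeg s => MNeg (tau s)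
  | AAdd s u =>
      MOtimes (MOplus (tau s) (tau u)) (MOplus MHalf (MOtimes (tau s) (tau u)))
  | AJoin s u => MJoin (tau s) (tau u)
  | AMeet s u => MMeet (tau s) (tau u)
  end.

Definition r (M k : nat) (a : R) : R := a / 2 ^ (M + k + 1) + 1/2.

From Stdlib Require Import Reals Lra Lia Rminmax Morphisms.
Open Scope R_scope.

(* The map [r M k] is an increasing affine map: it
   sends [0] to [1/2] and [-x] to [1 - r x], and it commutes with min and max.
   The translation of [+] computes [u + v - 1/2] truncated to [[0,1]], which is
   [r (x + y)] as long as no truncation occurs.  A term of depth [l] takes
   values of modulus at most [2^(M+l)] on inputs in [[-2^M, 2^M]], and [r M k]
   maps such values into [1/2 +- 1/2^(k-l+1)], a subinterval of [[0,1]] when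
   [l <= k]; so truncation never occurs. *)

Lemma eval_MV_tau_add (s u : AbTerm) (a : nat -> R) :
  eval_MV (tau (AAdd s u)) a =
  Rmax 0 (Rmin 1 (eval_MV (tau s) a + eval_MV (tau u) a - 1/2)).
Proof.
  cbn [tau eval_MV].
  set (x := eval_MV (tau s) a); set (y := eval_MV (tau u) a).
  unfold Rmin, Rmax; repeat destruct Rle_dec; lra.
Qed.

Lemma scaled_pow2_le (B : R) (m n : nat) :
  0 <= B -> (m <= n)%nat -> B * 2 ^ m <= B * 2 ^ n.
Proof.
  intros HB Hmn; apply Rmult_le_compat_l; [exact HB|].
  apply Rle_pow; [lra | exact Hmn].
Qed.

Lemma eval_Ab_bound (B : R) (n : nat) (phi : AbTerm) (a : nat -> R) :
  0 <= B -> (forall i : nat, (i < n)%nat -> - B <= a i <= B) ->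
  ab_vars_lt n phi ->
  - (B * 2 ^ depth phi) <= eval_Ab phi a <= B * 2 ^ depth phi.
Proof.
  intros HB Ha.
  induction phi as [i| |s IHs|s IHs u IHu|s IHs u IHu|s IHs u IHu];
    cbn [ab_vars_lt eval_Ab depth]; intros Hv.
  4-6: destruct Hv as [Hvs Hvu]; specialize (IHs Hvs); specialize (IHu Hvu);
    set (D := Nat.max (depth s) (depth u));
    pose proof (scaled_pow2_le B (depth s) D HB ltac:(lia));
    pose proof (scaled_pow2_le B (depth u) D HB ltac:(lia));
    pose proof (scaled_pow2_le B 0 D HB ltac:(lia));
    rewrite pow_O in *; cbn [pow].
  - rewrite pow_O, Rmult_1_r; exact (Ha i Hv).
  - rewrite pow_O; lra.
  - specialize (IHs Hv).
    pose proof (scaled_pow2_le B (depth s) (S (depth s)) HB ltac:(lia)); lra.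
  - lra.
  - unfold Rmin; destruct Rle_dec; lra.
  - unfold Rmax; destruct Rle_dec; lra.
Qed.

Section Rescaling.

Variables M k : nat.

Lemma r_0 : r M k 0 = 1/2.
Proof. unfold r, Rdiv; ring. Qed.

Lemma r_opp (x : R) : 1 - r M k x = r M k (- x).
Proof. unfold r; field; apply pow_nonzero; lra. Qed.

Lemma r_add (x y : R) : r M k x + r M k y - 1/2 = r M k (x + y).
Proof. unfold r; field; apply pow_nonzero; lra. Qed.

Lemma r_monotone : Proper (Rle ==> Rle) (r M k).
Proof.
  intros x y Hxy; unfold r, Rdiv; apply Rplus_le_compat_r.
  apply Rmult_le_compat_r; [|exact Hxy].
  apply Rlt_le, Rinv_0_lt_compat, pow_lt; lra.
Qed.

Lemma r_half_width (d : nat) (x : R) :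
  (d <= k)%nat -> - (2 ^ M * 2 ^ d) <= x <= 2 ^ M * 2 ^ d ->
  1/2 - 1 / 2 ^ (k - d + 1) <= r M k x <= 1/2 + 1 / 2 ^ (k - d + 1).
Proof.
  intros Hdk Hx.
  set (c := 2 ^ M * 2 ^ d) in Hx |- *; set (e := 2 ^ (k - d + 1)).
  assert (Hc : 0 < c) by (apply Rmult_lt_0_compat; apply pow_lt; lra).
  assert (He : 0 < e) by (apply pow_lt; lra).
  assert (Hce : 2 ^ (M + k + 1) = c * e).
  { unfold c, e; rewrite <- !pow_add; f_equal; lia. }
  assert (Hy : -1 <= x / c <= 1).
  { assert (0 < / c) by (apply Rinv_0_lt_compat; lra).
    assert (c * / c = 1) by (field; lra).
    unfold Rdiv; split; nra. }
  unfold r; rewrite Hce.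
  replace (x / (c * e)) with (x / c * (1 / e)) by (field; lra).
  assert (0 < 1 / e) by (apply Rdiv_lt_0_compat; lra).
  split; nra.
Qed.

Lemma r_unit_interval (d : nat) (x : R) :
  (d <= k)%nat -> - (2 ^ M * 2 ^ d) <= x <= 2 ^ M * 2 ^ d ->
  0 <= r M k x <= 1.
Proof.
  intros Hdk Hx.
  assert (1 / 2 ^ (k - d + 1) <= 1/2).
  { unfold Rdiv; rewrite !Rmult_1_l; apply Rinv_le_contravar; [lra|].
    rewrite pow_add, pow_1.
    pose proof (pow_R1_Rle 2 (k - d) ltac:(lra)); lra. }
  pose proof (r_half_width d x Hdk Hx); lra.
Qed.

Lemma eval_MV_tau (n : nat) (phi : AbTerm) (a : nat -> R) :
  (forall i : nat, (i < n)%nat -> - 2 ^ M <= a i <= 2 ^ M) ->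
  ab_vars_lt n phi -> (depth phi <= k)%nat ->
  eval_MV (tau phi) (fun i => r M k (a i)) = r M k (eval_Ab phi a).
Proof.
  intros Ha.
  assert (HM : 0 <= 2 ^ M) by (apply pow_le; lra).
  induction phi as [i| |s IHs|s IHs u IHu|s IHs u IHu|s IHs u IHu];
    intros Hv Hd; cbn [ab_vars_lt depth] in Hv, Hd.
  - reflexivity.
  - symmetry; exact r_0.
  - cbn [tau eval_Ab eval_MV]; rewrite IHs by (exact Hv || lia); apply r_opp.
  - destruct Hv as [Hvs Hvu].
    rewrite eval_MV_tau_add, IHs, IHu, r_add by (assumption || lia).
    assert (Hsum := eval_Ab_bound (2 ^ M) n (AAdd s u) a HM Ha (conj Hvs Hvu)).
    destruct (r_unit_interval _ _ Hd Hsum) as [H0 H1].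
    cbn [eval_Ab] in H0, H1 |- *; rewrite Rmin_right, Rmax_right; lra.
  - destruct Hv as [Hvs Hvu]; cbn [tau eval_Ab eval_MV].
    rewrite IHs, IHu by (assumption || lia); apply R.min_monotone, r_monotone.
  - destruct Hv as [Hvs Hvu]; cbn [tau eval_Ab eval_MV].
    rewrite IHs, IHu by (assumption || lia); apply R.max_monotone, r_monotone.
Qed.

End Rescaling.

Theorem mainTheorem4 (M k n : nat) (phi : AbTerm) (a : nat -> R) :
  ab_vars_lt n phi ->
  (depth phi <= k)%nat ->
  (forall i : nat, (i < n)%nat -> - 2 ^ M <= a i <= 2 ^ M) ->
  eval_MV (tau phi) (fun i => r M k (a i)) = r M k (eval_Ab phi a) /\
  1/2 - 1 / 2 ^ (k - depth phi + 1) <= r M k (eval_Ab phi a) <=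
  1/2 + 1 / 2 ^ (k - depth phi + 1).
Proof.
  intros Hv Hd Ha; split.
  - exact (eval_MV_tau M k n phi a Ha Hv Hd).
  - apply r_half_width; [exact Hd|].
    apply (eval_Ab_bound (2 ^ M) n); [apply pow_le; lra | exact Ha | exact Hv].
Qed.
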